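(* Let $y_0\in E$ and suppose: (A1) $\eta>0$ on $[y_0,\infty)$ and $\eta\in C^2([y_0,\infty))$; (A2) $b^2/\eta$, $\tilde a/\eta$ and $\eta'/\eta$ are bounded on $[y_0,\infty)$; (A3) $\Psi\eta(y)\to1$ as $y\to\infty$. Let $u$ be a solution of $$0=\tfrac12b^2u''+\tilde au'+\eta u-u^2-d\frac{(u')^2}{u}$$ on $[y_0,\infty)$ with $C_1\eta\le u\le C_2\eta$ there, for some constants $0<C_1<C_2$. Then $u(y)/\eta(y)\to1$ as $y\to\infty$.
   Context: $E=(E_-,\infty)$ with $E_-\in\{-\infty\}\cup\mathbb R$. $r,\lambda,\sigma,a,b,\rho,\delta:E\to\mathbb R$ are locally Lipschitz with $\sigma>0$, $b(y)\neq0$, $\rho(y)\in[-1,1]$; $R\in(0,\infty)\setminus\{1\}$. Define $\eta=\frac1R\big(\delta-(1-R)(r+\frac{\lambda^2}{2R})\big)$, $\tilde a=a+\frac{1-R}{R}\rho\lambda b$, $d=\frac12b^2((1-\rho^2)R+\rho^2+1)$, and for positive $g\in C^2$, $\Psi g=1+\frac{\frac12b^2g''+\tilde ag'}{g^2}-d\frac{(g')^2}{g^3}$. A solution on $[y_0,\infty)$ is a positive $C^2$ function satisfying the equation there. *)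

From Stdlib Require Import Reals.
From Coquelicot Require Import Coquelicot.
Open Scope R_scope.

(* The state space E = (Em, +oo), with Em in {-oo} U R (Em <> +oo). *)
Definition inE (Em : Rbar) (y : R) : Prop := Rbar_lt Em (Finite y).

Definition loc_lipschitz_on (Em : Rbar) (f : R -> R) : Prop :=
  forall y, inE Em y -> exists eps L, 0 < eps /\
    forall x z, inE Em x -> inE Em z -> Rabs (x - y) < eps -> Rabs (z - y) < eps ->
      Rabs (f x - f z) <= L * Rabs (x - z).

Definition is_deriv_from (y0 : R) (f f' : R -> R) : Prop :=
  forall y, y0 <= y ->
    filterlim (fun x => (f x - f y) / (x - y))
      (within (fun x => x <> y /\ y0 <= x) (locally y)) (locally (f' y)).

Definition cont_from (y0 : R) (f : R -> R) : Prop :=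
  forall y, y0 <= y ->
    filterlim f (within (fun x => y0 <= x) (locally y)) (locally (f y)).

Definition is_C2_from (y0 : R) (f f1 f2 : R -> R) : Prop :=
  is_deriv_from y0 f f1 /\ is_deriv_from y0 f1 f2 /\ cont_from y0 f2.

Definition bounded_from (y0 : R) (f : R -> R) : Prop :=
  exists M, forall y, y0 <= y -> Rabs (f y) <= M.

(* Model coefficients; Rr is the parameter R of the paper. *)
Definition eta (Rr : R) (r lam delta : R -> R) (y : R) : R :=
  / Rr * (delta y - (1 - Rr) * (r y + (lam y) ^ 2 / (2 * Rr))).

Definition atilde (Rr : R) (a rho lam b : R -> R) (y : R) : R :=
  a y + (1 - Rr) / Rr * rho y * lam y * b y.

Definition dcoef (Rr : R) (b rho : R -> R) (y : R) : R :=
  / 2 * (b y) ^ 2 * ((1 - (rho y) ^ 2) * Rr + (rho y) ^ 2 + 1).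

Definition Psi (b atl d : R -> R) (g g1 g2 : R -> R) (y : R) : R :=
  1 + (/ 2 * (b y) ^ 2 * g2 y + atl y * g1 y) / (g y) ^ 2
    - d y * (g1 y) ^ 2 / (g y) ^ 3.

Definition is_solution_from (y0 : R) (b atl et d : R -> R) (u u1 u2 : R -> R) : Prop :=
  is_C2_from y0 u u1 u2 /\ (forall y, y0 <= y -> 0 < u y) /\
  (forall y, y0 <= y ->
     0 = / 2 * (b y) ^ 2 * u2 y + atl y * u1 y + et y * u y - (u y) ^ 2
         - d y * (u1 y) ^ 2 / u y).

From Stdlib Require Import Reals Lra Classical.
From Coquelicot Require Import Coquelicot.
Open Scope R_scope.

(* Put w = u / eta.  Dividing the equation for u by eta^2 gives
     A w'' = w (w - Psi eta) - B w' + D w'^2 / w,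
   with A = b^2 / (2 eta) > 0, D = d / eta >= 0, and A, B, D bounded by (A2).
   Fix dl > 0.  By (A3), at large y where w > 1 + dl and w' is small the
   right-hand side is at least dl/4, so w'' is bounded below by a positive constant.  A bounded C^2
   function cannot stay above a level where it is uniformly convex whenever flat:
   from such a point with w' >= 0 it would be pushed up linearly forwards (with
   w' <= 0, backwards), beyond its bound.  Hence eventually w <= 1 + dl.  The same
   argument applied to -w, using w >= C1 to control D w'^2 / w, gives
   w >= 1 - dl eventually. *)

Lemma continuity_pt_of_derivable_pt_lim f x l :
  derivable_pt_lim f x l -> continuity_pt f x.
Proof. intro H. exact (derivable_continuous_pt f x (exist _ l H)). Qed.

Lemma continuity_pt_of_lipschitz f k x :
  0 < k -> (forall y z, Rabs (f y - f z) <= k * Rabs (y - z)) -> continuity_pt f x.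
Proof.
  intros Hk Hf. apply continuity_pt_locally. intros eps.
  assert (Hd : 0 < eps / k) by (apply Rdiv_lt_0_compat; [apply cond_pos | lra]).
  exists (mkposreal _ Hd). intros y Hy. simpl in Hy.
  eapply Rle_lt_trans; [apply Hf |].
  apply (Rmult_lt_compat_l k) in Hy; [| lra].
  replace (k * (eps / k)) with (pos eps) in Hy by (field; lra). exact Hy.
Qed.

Lemma continuity_pt_nonneg_from_left h a x :
  a < x -> continuity_pt h x -> (forall z, a <= z < x -> 0 <= h z) -> 0 <= h x.
Proof.
  intros Hax Hc Hh. apply Rnot_lt_le. intro Hneg.
  destruct (proj1 (continuity_pt_locally h x) Hc (mkposreal _ (Ropp_0_gt_lt_contravar _ Hneg)))
    as [d Hd].
  set (z := x - Rmin d (x - a) / 2).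
  assert (Hm : 0 < Rmin d (x - a) <= x - a)
    by (split; [apply Rmin_pos; [apply cond_pos | lra] | apply Rmin_r]).
  assert (Hmd : Rmin d (x - a) <= d) by apply Rmin_l.
  assert (Hz : Rabs (h z - h x) < - h x).
  { apply (Hd z). change (Rabs (z - x) < d). unfold z.
    rewrite Rabs_left; lra. }
  specialize (Hh z ltac:(unfold z; lra)). apply Rabs_def2 in Hz. lra.
Qed.

Lemma continuity_pt_pos_near h x :
  continuity_pt h x -> 0 < h x -> exists d, 0 < d /\ forall z, Rabs (z - x) < d -> 0 < h z.
Proof.
  intros Hc Hpos.
  destruct (proj1 (continuity_pt_locally h x) Hc (mkposreal _ Hpos)) as [d Hd].
  exists d. split; [apply cond_pos |]. intros z Hz.
  specialize (Hd z Hz). apply Rabs_def2 in Hd. simpl in Hd. lra.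
Qed.

Lemma derivable_pt_lim_right_lower f x l m :
  derivable_pt_lim f x l -> m < l ->
  exists d, 0 < d /\ forall z, x < z < x + d -> f x + m * (z - x) <= f z.
Proof.
  intros Hf Hml. destruct (Hf (l - m) ltac:(lra)) as [d Hd].
  exists d. split; [apply cond_pos |]. intros z Hz.
  specialize (Hd (z - x) ltac:(lra) ltac:(rewrite Rabs_right; lra)).
  replace (x + (z - x)) with z in Hd by ring.
  apply Rabs_def2 in Hd.
  assert (Hq : m * (z - x) < (f z - f x) / (z - x) * (z - x))
    by (apply Rmult_lt_compat_r; lra).
  replace ((f z - f x) / (z - x) * (z - x)) with (f z - f x) in Hq by (field; lra). lra.
Qed.

Lemma increment_ge_of_deriv_ge g g1 m p q :
  p <= q -> (forall x, p <= x <= q -> derivable_pt_lim g x (g1 x)) ->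
  (forall x, p <= x <= q -> m <= g1 x) -> g p + m * (q - p) <= g q.
Proof.
  intros Hpq Hd Hm. destruct (Req_dec p q) as [<- | Hne]; [lra |].
  destruct (MVT_cor2 g g1 p q ltac:(lra) Hd) as [x [Hx Hxpq]].
  specialize (Hm x ltac:(lra)). nra.
Qed.

Lemma derivable_pt_lim_reflect f x l :
  derivable_pt_lim f (- x) l -> derivable_pt_lim (fun y => f (- y)) x (- l).
Proof.
  intro Hf. replace (- l) with (l * -1) by ring.
  apply (derivable_pt_lim_comp (fun y => - y) f x (-1) l); [| exact Hf].
  replace (-1) with (- (1)) by ring.
  apply (derivable_pt_lim_opp id x 1), derivable_pt_lim_id.
Qed.

Lemma continuous_induction (P : R -> Prop) a e :
  P a ->
  (forall x, a < x <= e -> (forall z, a <= z < x -> P z) -> P x) ->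
  (forall x, a <= x < e -> (forall z, a <= z <= x -> P z) ->
     exists d, 0 < d /\ forall z, x < z < x + d -> P z) ->
  forall x, a <= x <= e -> P x.
Proof.
  intros Ha Hclosed Hopen x0 Hx0. apply NNPP. intro Hnot.
  set (S y := a <= y <= e /\ forall z, a <= z <= y -> P z).
  assert (HSa : S a) by (split; [lra | intros z Hz; replace z with a by lra; exact Ha]).
  destruct (completeness S (ex_intro _ e (fun y Hy => proj2 (proj1 Hy)))
              (ex_intro _ a HSa)) as [s [Hub Hlub]].
  assert (Has : a <= s) by (apply Hub, HSa).
  assert (Hse : s <= e) by (apply Hlub; intros y [Hy _]; lra).
  assert (Hbelow : forall z, a <= z < s -> P z).
  { intros z Hz. apply NNPP. intro Hz'.
    enough (s <= z) by lra. apply Hlub. intros y [Hy Hy'].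
    apply Rnot_lt_le. intro Hzy. apply Hz', Hy'. lra. }
  assert (Hupto : forall z, a <= z <= s -> P z).
  { intros z Hz. destruct (Req_dec z s) as [-> |]; [| apply Hbelow; lra].
    destruct (Req_dec s a) as [-> | Hsa]; [exact Ha |].
    apply Hclosed; [lra | exact Hbelow]. }
  destruct (Req_dec s e) as [-> | Hsne]; [exact (Hnot (Hupto x0 Hx0)) |].
  destruct (Hopen s ltac:(lra) Hupto) as [d [Hd Hext]].
  set (y := s + Rmin d (e - s) / 2).
  assert (Hm : 0 < Rmin d (e - s)) by (apply Rmin_pos; lra).
  pose proof (Rmin_l d (e - s)). pose proof (Rmin_r d (e - s)).
  enough (S y) by (assert (y <= s) by (apply Hub; auto); unfold y in *; lra).
  split; [unfold y; lra |]. intros z Hz.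
  destruct (Rle_dec z s); [apply Hupto; lra | apply Hext; unfold y in *; lra].
Qed.

Section Ramp.
Variables (g g1 g2 : R -> R) (c eps kap a e : R).
Hypotheses (Heps : 0 < eps) (Hkap : 0 < kap)
  (Hg1 : forall x, a <= x <= e -> derivable_pt_lim g x (g1 x))
  (Hg2 : forall x, a <= x <= e -> derivable_pt_lim g1 x (g2 x))
  (Hconv : forall x, a <= x <= e -> c < g x -> Rabs (g1 x) <= eps -> kap <= g2 x)
  (Hga : c < g a) (Hg1a : 0 <= g1 a).

(* Lower barrier for g': it starts at 0, rises with slope kap/2 < kap <= g''
   while g' is small, and saturates at eps/2. *)
Let ramp x := Rmin (eps / 2) (kap * (x - a) / 2).

Let ramp_at_a : ramp a = 0.
Proof. unfold ramp, Rmin. destruct Rle_dec; lra. Qed.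

Let ramp_nonneg x : a <= x -> 0 <= ramp x.
Proof. intro. unfold ramp, Rmin. destruct Rle_dec; nra. Qed.

Let ramp_le x : ramp x <= eps / 2.
Proof. apply Rmin_l. Qed.

Let ramp_saturated x : a + eps / kap <= x -> ramp x = eps / 2.
Proof.
  intro Hx. unfold ramp, Rmin. destruct Rle_dec as [| Hn]; [reflexivity |].
  exfalso. apply Hn. apply (Rmult_le_compat_l kap) in Hx; [| lra].
  replace (kap * (a + eps / kap)) with (kap * a + eps) in Hx by (field; lra). lra.
Qed.

Let ramp_lipschitz y z : Rabs (ramp y - ramp z) <= kap / 2 * Rabs (y - z).
Proof.
  replace (kap / 2 * Rabs (y - z)) with (Rabs (kap * (y - a) / 2 - kap * (z - a) / 2)).
  2: { replace (kap * (y - a) / 2 - kap * (z - a) / 2) with (kap / 2 * (y - z)) by field.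
       rewrite Rabs_mult, (Rabs_right (kap / 2)) by lra. reflexivity. }
  unfold ramp, Rmin. destruct (Rle_dec (eps / 2) (kap * (y - a) / 2));
    destruct (Rle_dec (eps / 2) (kap * (z - a) / 2)); unfold Rabs;
    repeat destruct Rcase_abs; lra.
Qed.

Lemma ramp_le_deriv x : a <= x <= e -> ramp x <= g1 x.
Proof.
  set (h y := g1 y - ramp y).
  assert (Hh : forall y, a <= y <= e -> continuity_pt h y).
  { intros y Hy. apply continuity_pt_minus.
    - exact (continuity_pt_of_derivable_pt_lim _ _ _ (Hg2 y Hy)).
    - exact (continuity_pt_of_lipschitz _ (kap / 2) _ ltac:(lra) ramp_lipschitz). }
  apply (continuous_induction (fun y => ramp y <= g1 y) a e).
  - rewrite ramp_at_a. exact Hg1a.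
  - intros y Hy Hbelow.
    enough (0 <= h y) by (unfold h in *; lra).
    apply (continuity_pt_nonneg_from_left h a y); [lra | apply Hh; lra |].
    intros z Hz. specialize (Hbelow z Hz). unfold h. lra.
  - intros y Hy Hupto.
    assert (Hgy : c < g y).
    { enough (g a <= g y) by lra.
      replace (g a) with (g a + 0 * (y - a)) by ring.
      apply (increment_ge_of_deriv_ge g g1); [lra | intros; apply Hg1; lra |].
      intros z Hz. specialize (Hupto z Hz). specialize (ramp_nonneg z ltac:(lra)). lra. }
    destruct (Rle_lt_or_eq_dec _ _ (Hupto y ltac:(lra))) as [Hlt | Heq].
    + destruct (continuity_pt_pos_near h y (Hh y ltac:(lra)) ltac:(unfold h; lra))
        as [d [Hd Hnear]].
      exists d. split; [exact Hd |]. intros z Hz.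
      specialize (Hnear z ltac:(rewrite Rabs_right; lra)). unfold h in Hnear. lra.
    + assert (Hflat : Rabs (g1 y) <= eps).
      { rewrite <- Heq. pose proof (ramp_nonneg y ltac:(lra)).
        pose proof (ramp_le y). rewrite Rabs_right; lra. }
      pose proof (Hconv y ltac:(lra) Hgy Hflat) as Hacc.
      destruct (derivable_pt_lim_right_lower g1 y (g2 y) (kap / 2) (Hg2 y ltac:(lra))
                  ltac:(lra)) as [d [Hd Hright]].
      exists d. split; [exact Hd |]. intros z Hz.
      specialize (Hright z Hz).
      pose proof (ramp_lipschitz z y) as Hlip.
      rewrite (Rabs_right (z - y)) in Hlip by lra. apply Rabs_le_between in Hlip. lra.
Qed.

Lemma ramp_growth : a + eps / kap <= e -> g a + eps / 2 * (e - a - eps / kap) <= g e.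
Proof.
  intro Hae. set (a' := a + eps / kap).
  assert (Hek : 0 < eps / kap) by (apply Rdiv_lt_0_compat; lra).
  assert (Hfirst : g a <= g a').
  { replace (g a) with (g a + 0 * (a' - a)) by ring.
    apply (increment_ge_of_deriv_ge g g1); [unfold a'; lra | intros; apply Hg1; unfold a' in *; lra |].
    intros x Hx. pose proof (ramp_nonneg x ltac:(lra)). pose proof (ramp_le_deriv x ltac:(unfold a' in *; lra)).
    lra. }
  assert (Hsecond : g a' + eps / 2 * (e - a') <= g e).
  { apply (increment_ge_of_deriv_ge g g1); [exact Hae | intros; apply Hg1; unfold a' in *; lra |].
    intros x Hx. rewrite <- (ramp_saturated x ltac:(unfold a' in *; lra)). apply ramp_le_deriv. unfold a' in *; lra. }
  unfold a' in *. lra.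
Qed.

End Ramp.

Lemma ramp_growth_backward g g1 g2 c eps kap e a :
  0 < eps -> 0 < kap ->
  (forall x, e <= x <= a -> derivable_pt_lim g x (g1 x)) ->
  (forall x, e <= x <= a -> derivable_pt_lim g1 x (g2 x)) ->
  (forall x, e <= x <= a -> c < g x -> Rabs (g1 x) <= eps -> kap <= g2 x) ->
  c < g a -> g1 a <= 0 -> e + eps / kap <= a ->
  g a + eps / 2 * (a - e - eps / kap) <= g e.
Proof.
  intros Heps Hkap Hg1 Hg2 Hconv Hga Hg1a Hae.
  pose proof (ramp_growth (fun x => g (- x)) (fun x => - g1 (- x)) (fun x => g2 (- x))
    c eps kap (- a) (- e) Heps Hkap) as Hgrowth.
  cbv beta in Hgrowth. rewrite !Ropp_involutive in Hgrowth.
  replace (- e - - a) with (a - e) in Hgrowth by ring.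
  apply Hgrowth; [| | | exact Hga | lra | lra].
  - intros x Hx. apply derivable_pt_lim_reflect, Hg1. lra.
  - intros x Hx. replace (g2 (- x)) with (- - g2 (- x)) by ring.
    apply derivable_pt_lim_opp, derivable_pt_lim_reflect, Hg2. lra.
  - intros x Hx Hgx Hflat. rewrite Rabs_Ropp in Hflat. apply Hconv; auto; lra.
Qed.

Lemma eventually_le_of_convex_where_flat g g1 g2 T c eps kap :
  0 < eps -> 0 < kap ->
  (forall x, T <= x -> derivable_pt_lim g x (g1 x)) ->
  (forall x, T <= x -> derivable_pt_lim g1 x (g2 x)) ->
  (forall x, T <= x -> c < g x -> Rabs (g1 x) <= eps -> kap <= g2 x) ->
  bounded_from T g ->
  exists S, forall s, S <= s -> g s <= c.
Proof.
  intros Heps Hkap Hg1 Hg2 Hconv [K HK].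
  assert (HK0 : 0 <= K) by (eapply Rle_trans; [apply Rabs_pos | apply (HK T); lra]).
  assert (Hek : 0 < eps / kap) by (apply Rdiv_lt_0_compat; lra).
  set (L := eps / kap + 4 * K / eps + 1).
  (* over a span L the ramp-driven growth exceeds the oscillation 2K allowed by |g| <= K *)
  assert (HL : 2 * K < eps / 2 * (L - eps / kap)).
  { unfold L. replace (eps / 2 * (eps / kap + 4 * K / eps + 1 - eps / kap))
      with (2 * K + eps / 2) by (field; lra). lra. }
  assert (H4K : 0 <= 4 * K / eps) by (apply Rmult_le_pos; [lra | left; apply Rinv_0_lt_compat; lra]).
  exists (T + L). intros s Hs. apply Rnot_lt_le. intro Hgs.
  pose proof (Rabs_le_between (g s) K) as [Hbs _]. specialize (Hbs (HK s ltac:(unfold L in *; lra))).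
  destruct (Rle_or_lt 0 (g1 s)) as [Hup | Hdown].
  - pose proof (ramp_growth g g1 g2 c eps kap s (s + L) Heps Hkap
      (fun x Hx => Hg1 x ltac:(lra)) (fun x Hx => Hg2 x ltac:(lra))
      (fun x Hx => Hconv x ltac:(lra)) Hgs Hup ltac:(unfold L; lra)) as Hgrowth.
    pose proof (proj1 (Rabs_le_between _ _) (HK (s + L) ltac:(unfold L in *; lra))).
    replace (s + L - s) with L in Hgrowth by ring. lra.
  - pose proof (ramp_growth_backward g g1 g2 c eps kap T s Heps Hkap
      (fun x Hx => Hg1 x ltac:(lra)) (fun x Hx => Hg2 x ltac:(lra))
      (fun x Hx => Hconv x ltac:(lra)) Hgs ltac:(lra) ltac:(unfold L in *; lra)) as Hgrowth.
    pose proof (proj1 (Rabs_le_between _ _) (HK T ltac:(lra))).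
    assert (eps / 2 * (L - eps / kap) <= eps / 2 * (s - T - eps / kap))
      by (apply Rmult_le_compat_l; lra).
    lra.
Qed.

Lemma small_step_exists k t :
  0 <= k -> 0 < t -> exists ep, 0 < ep <= 1 /\ k * ep <= t.
Proof.
  intros Hk Ht. exists (Rmin 1 (t / (k + 1))).
  pose proof (Rmin_l 1 (t / (k + 1))) as H1. pose proof (Rmin_r 1 (t / (k + 1))) as H2.
  assert (Hq : 0 < t / (k + 1)) by (apply Rdiv_lt_0_compat; lra).
  split; [split; [apply Rmin_pos |]; lra |].
  apply Rle_trans with (k * (t / (k + 1))); [apply Rmult_le_compat_l; lra |].
  apply Rle_trans with ((k + 1) * (t / (k + 1))); [nra |].
  right. field. lra.
Qed.

Lemma div_le_of_le_mul a m k z : 0 < a <= m -> 0 <= k -> k <= a * z -> k / m <= z.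
Proof.
  intros [Ha Ham] Hk Hkz.
  apply Rle_trans with (k / a).
  - unfold Rdiv. apply Rmult_le_compat_l; [exact Hk |]. apply Rinv_le_contravar; lra.
  - replace z with (a * z / a) by (field; lra).
    unfold Rdiv. apply Rmult_le_compat_r; [left; apply Rinv_0_lt_compat |]; lra.
Qed.

Lemma Rabs_mult_le x y mx my : Rabs x <= mx -> Rabs y <= my -> Rabs (x * y) <= mx * my.
Proof. intros. rewrite Rabs_mult. apply Rmult_le_compat; auto; apply Rabs_pos. Qed.

Lemma accel_above a w w1 w2 p b d dl ep mb :
  0 < dl -> 0 <= d -> Rabs b <= mb -> mb * ep <= dl / 4 ->
  a * w2 = w * (w - p) - b * w1 + d * w1 ^ 2 / w ->
  1 + dl < w -> p <= 1 + dl / 2 -> Rabs w1 <= ep -> dl / 4 <= a * w2.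
Proof.
  intros Hdl Hd Hb Hep Heq Hw Hp Hw1.
  assert (Hcurv : 0 <= d * w1 ^ 2 / w)
    by (apply Rmult_le_pos; [apply Rmult_le_pos; [exact Hd | apply pow2_ge_0] |
                            left; apply Rinv_0_lt_compat; lra]).
  pose proof (proj1 (Rabs_le_between _ _) (Rabs_mult_le _ _ _ _ Hb Hw1)).
  assert (dl / 2 <= w * (w - p)) by nra.
  lra.
Qed.

Lemma accel_below a w w1 w2 p b d dl ep mb md c1 :
  0 < dl -> 0 <= d <= md -> Rabs b <= mb -> 0 < c1 <= w -> ep <= 1 ->
  (mb + md / c1) * ep <= c1 * dl / 4 ->
  a * w2 = w * (w - p) - b * w1 + d * w1 ^ 2 / w ->
  w < 1 - dl -> 1 - dl / 2 <= p -> Rabs w1 <= ep -> c1 * dl / 4 <= a * - w2.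
Proof.
  intros Hdl [Hd Hmd] Hb [Hc1 Hw1] Hep1 Hep Heq Hw Hp Hw1e.
  pose proof (proj1 (Rabs_le_between _ _) (Rabs_mult_le _ _ _ _ Hb Hw1e)).
  assert (Hsq : w1 ^ 2 <= ep).
  { destruct (proj1 (Rabs_le_between _ _) Hw1e).
    assert (0 <= (ep - w1) * (ep + w1)) by (apply Rmult_le_pos; lra).
    assert (0 <= ep * (1 - ep)) by (apply Rmult_le_pos; lra).
    simpl. nra. }
  assert (Hcurv : d * w1 ^ 2 / w <= md * ep / c1).
  { unfold Rdiv. apply Rmult_le_compat; [nra | left; apply Rinv_0_lt_compat; lra | |].
    - apply Rmult_le_compat; [lra | apply pow2_ge_0 | lra | exact Hsq].
    - apply Rinv_le_contravar; lra. }
  assert (w * (w - p) <= - (c1 * dl / 2)).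
  { assert (w - p <= - (dl / 2)) by lra. nra. }
  replace ((mb + md / c1) * ep) with (mb * ep + md * ep / c1) in Hep by (field; lra).
  lra.
Qed.

Section RatioLimit.
Variables (T0 C1 : R) (w w1 w2 A B D P : R -> R).
Hypotheses
  (Hw1 : forall x, T0 < x -> derivable_pt_lim w x (w1 x))
  (Hw2 : forall x, T0 < x -> derivable_pt_lim w1 x (w2 x))
  (Heq : forall x, T0 <= x ->
     A x * w2 x = w x * (w x - P x) - B x * w1 x + D x * w1 x ^ 2 / w x)
  (HApos : forall x, T0 <= x -> 0 < A x) (HAb : bounded_from T0 A)
  (HBb : bounded_from T0 B)
  (HDpos : forall x, T0 <= x -> 0 <= D x) (HDb : bounded_from T0 D)
  (HC1 : 0 < C1) (HwC1 : forall x, T0 <= x -> C1 <= w x) (Hwb : bounded_from T0 w)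
  (HP : is_lim P p_infty 1).

Let bound_nonneg f M : (forall x, T0 <= x -> Rabs (f x) <= M) -> 0 <= M.
Proof. intro Hf. eapply Rle_trans; [apply Rabs_pos | apply (Hf T0); lra]. Qed.

Let P_close dl : 0 < dl -> exists T, T0 < T /\ forall x, T <= x -> Rabs (P x - 1) <= dl.
Proof.
  intro Hdl. destruct (proj2 (is_lim_spec P p_infty 1) HP (mkposreal dl Hdl)) as [M HM].
  exists (Rmax M T0 + 1). split; [pose proof (Rmax_r M T0); lra |].
  intros x Hx. left. apply HM. pose proof (Rmax_l M T0). lra.
Qed.

Lemma ratio_eventually_le dl : 0 < dl -> exists S, forall s, S <= s -> w s <= 1 + dl.
Proof.
  intro Hdl. destruct HAb as [MA HMA]. destruct HBb as [MB HMB].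
  assert (HMA0 : 0 < MA)
    by (eapply Rlt_le_trans; [apply (HApos T0) | eapply Rle_trans; [apply Rle_abs | apply HMA]]; lra).
  destruct (small_step_exists MB (dl / 4) (bound_nonneg _ _ HMB) ltac:(lra)) as [ep [Hep HMBep]].
  destruct (P_close (dl / 2) ltac:(lra)) as [T [HT HPT]].
  apply (eventually_le_of_convex_where_flat w w1 w2 T (1 + dl) ep (dl / (4 * MA)));
    [lra | apply Rdiv_lt_0_compat; lra | intros; apply Hw1; lra | intros; apply Hw2; lra | |].
  - intros x Hx Hwx Hw1x.
    replace (dl / (4 * MA)) with (dl / 4 / MA) by (field; lra).
    apply (div_le_of_le_mul (A x)); [split; [apply HApos | eapply Rle_trans; [apply Rle_abs | apply HMA]]; lra | lra |].
    pose proof (proj1 (Rabs_le_between _ _) (HPT x Hx)).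
    apply (accel_above (A x) (w x) (w1 x) (w2 x) (P x) (B x) (D x) dl ep MB);
      auto; try apply HDpos; try apply HMB; try apply Heq; lra.
  - destruct Hwb as [K HK]. exists K. intros. apply HK. lra.
Qed.

Lemma ratio_eventually_ge dl : 0 < dl -> exists S, forall s, S <= s -> 1 - dl <= w s.
Proof.
  intro Hdl. destruct HAb as [MA HMA]. destruct HBb as [MB HMB]. destruct HDb as [MD HMD].
  assert (HMA0 : 0 < MA)
    by (eapply Rlt_le_trans; [apply (HApos T0) | eapply Rle_trans; [apply Rle_abs | apply HMA]]; lra).
  assert (HMDC : 0 <= MD / C1)
    by (apply Rmult_le_pos; [exact (bound_nonneg _ _ HMD) | left; apply Rinv_0_lt_compat; lra]).
  destruct (small_step_exists (MB + MD / C1) (C1 * dl / 4)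
              ltac:(pose proof (bound_nonneg _ _ HMB); lra) ltac:(nra)) as [ep [Hep HQep]].
  destruct (P_close (dl / 2) ltac:(lra)) as [T [HT HPT]].
  destruct (eventually_le_of_convex_where_flat (fun x => - w x) (fun x => - w1 x) (fun x => - w2 x)
              T (- (1 - dl)) ep (C1 * dl / (4 * MA))) as [S HS];
    [lra | apply Rdiv_lt_0_compat; nra | intros; apply derivable_pt_lim_opp, Hw1; lra |
     intros; apply derivable_pt_lim_opp, Hw2; lra | | |].
  - intros x Hx Hwx Hw1x. rewrite Rabs_Ropp in Hw1x.
    replace (C1 * dl / (4 * MA)) with (C1 * dl / 4 / MA) by (field; lra).
    apply (div_le_of_le_mul (A x)); [split; [apply HApos | eapply Rle_trans; [apply Rle_abs | apply HMA]]; lra | nra |].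
    pose proof (proj1 (Rabs_le_between _ _) (HPT x Hx)).
    apply (accel_below (A x) (w x) (w1 x) (w2 x) (P x) (B x) (D x) dl ep MB MD C1);
      auto; try apply HMB; try apply Heq; try split; try apply HDpos; try apply HwC1;
      try (eapply Rle_trans; [apply Rle_abs | apply HMD]); lra.
  - destruct Hwb as [K HK]. exists K. intros. rewrite Rabs_Ropp. apply HK. lra.
  - exists S. intros s Hs. specialize (HS s Hs). lra.
Qed.

Lemma ratio_limit : is_lim w p_infty 1.
Proof.
  apply is_lim_spec. intros eps. pose proof (cond_pos eps).
  destruct (ratio_eventually_le (eps / 2) ltac:(lra)) as [S1 HS1].
  destruct (ratio_eventually_ge (eps / 2) ltac:(lra)) as [S2 HS2].
  exists (Rmax S1 S2). intros s Hs.
  pose proof (HS1 s ltac:(pose proof (Rmax_l S1 S2); lra)).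
  pose proof (HS2 s ltac:(pose proof (Rmax_r S1 S2); lra)).
  apply Rabs_def1; simpl; lra.
Qed.

End RatioLimit.

Lemma derivable_pt_lim_of_is_deriv_from y0 f f' t :
  is_deriv_from y0 f f' -> y0 < t -> derivable_pt_lim f t (f' t).
Proof.
  intros Hf Ht eps Heps.
  assert (Hnear : locally (f' t) (fun y => Rabs (y - f' t) < eps))
    by (exists (mkposreal eps Heps); intros y Hy; exact Hy).
  destruct (Hf t (Rlt_le _ _ Ht) _ Hnear) as [d Hd].
  assert (Hpos : 0 < Rmin d (t - y0)) by (apply Rmin_pos; [apply cond_pos | lra]).
  exists (mkposreal _ Hpos). intros h Hh Hhd. simpl in Hhd.
  pose proof (Rmin_l d (t - y0)). pose proof (Rmin_r d (t - y0)).
  assert (Hball : ball t d (t + h)).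
  { change (Rabs (t + h - t) < d). replace (t + h - t) with h by ring. lra. }
  specialize (Hd (t + h) Hball). simpl in Hd.
  replace (t + h - t) with h in Hd by ring.
  apply Hd. split; [lra |]. apply Rabs_def2 in Hhd. lra.
Qed.

Definition quot_d1 (u u1 e e1 : R -> R) (t : R) : R :=
  (u1 t * e t - u t * e1 t) / (e t * e t).

Definition quot_d2 (u u1 u2 e e1 e2 : R -> R) (t : R) : R :=
  (u2 t * e t - u t * e2 t) / (e t * e t)
  - 2 * e1 t * (u1 t * e t - u t * e1 t) / (e t * e t * e t).

Lemma derivable_pt_lim_quot u u1 e e1 t :
  derivable_pt_lim u t (u1 t) -> derivable_pt_lim e t (e1 t) -> e t <> 0 ->
  derivable_pt_lim (fun s => u s / e s) t (quot_d1 u u1 e e1 t).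
Proof.
  intros Hu He Hne. unfold quot_d1.
  replace ((u1 t * e t - u t * e1 t) / (e t * e t)) with ((u1 t * e t - e1 t * u t) / (e t)²)
    by (unfold Rsqr; field; exact Hne).
  exact (derivable_pt_lim_div u e t _ _ Hu He Hne).
Qed.

Lemma derivable_pt_lim_quot_d1 u u1 u2 e e1 e2 t :
  derivable_pt_lim u t (u1 t) -> derivable_pt_lim u1 t (u2 t) ->
  derivable_pt_lim e t (e1 t) -> derivable_pt_lim e1 t (e2 t) -> e t <> 0 ->
  derivable_pt_lim (quot_d1 u u1 e e1) t (quot_d2 u u1 u2 e e1 e2 t).
Proof.
  intros Hu Hu1 He He1 Hne.
  assert (Hne2 : (e * e)%F t <> 0) by (apply Rmult_integral_contrapositive; auto).
  pose proof (derivable_pt_lim_div _ _ t _ _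
    (derivable_pt_lim_minus _ _ t _ _ (derivable_pt_lim_mult u1 e t _ _ Hu1 He)
                                      (derivable_pt_lim_mult u e1 t _ _ Hu He1))
    (derivable_pt_lim_mult e e t _ _ He He) Hne2) as Hd.
  unfold mult_fct, minus_fct in Hd. unfold quot_d1, quot_d2.
  match type of Hd with derivable_pt_lim _ _ ?v =>
    replace (_ - _) with v by (unfold Rsqr; field; exact Hne) end.
  exact Hd.
Qed.

Definition coefA (b e : R -> R) (t : R) : R := / 2 * b t ^ 2 / e t.

Definition coefB (b atl d e e1 : R -> R) (t : R) : R :=
  b t ^ 2 * e1 t / (e t * e t) + atl t / e t - 2 * d t * e1 t / (e t * e t).

Definition coefD (d e : R -> R) (t : R) : R := d t / e t.

Lemma ratio_equation b atl d u u1 u2 e e1 e2 t :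
  e t <> 0 -> u t <> 0 ->
  0 = / 2 * b t ^ 2 * u2 t + atl t * u1 t + e t * u t - u t ^ 2 - d t * u1 t ^ 2 / u t ->
  coefA b e t * quot_d2 u u1 u2 e e1 e2 t
  = u t / e t * (u t / e t - Psi b atl d e e1 e2 t)
    - coefB b atl d e e1 t * quot_d1 u u1 e e1 t
    + coefD d e t * quot_d1 u u1 e e1 t ^ 2 / (u t / e t).
Proof.
  intros He Hu Hode. unfold coefA, coefB, coefD, quot_d1, quot_d2, Psi.
  match goal with |- ?L = ?R =>
    assert (E : L - R = (/ 2 * b t ^ 2 * u2 t + atl t * u1 t + e t * u t - u t ^ 2
                         - d t * u1 t ^ 2 / u t) / (e t * e t)) by (field; auto) end.
  rewrite <- Hode in E. unfold Rdiv in E. rewrite Rmult_0_l in E. lra.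
Qed.

Lemma bounded_from_ext y0 f g :
  (forall y, y0 <= y -> f y = g y) -> bounded_from y0 f -> bounded_from y0 g.
Proof. intros Hfg [M HM]. exists M. intros y Hy. rewrite <- Hfg by exact Hy. auto. Qed.

Lemma bounded_from_plus y0 f g :
  bounded_from y0 f -> bounded_from y0 g -> bounded_from y0 (fun y => f y + g y).
Proof.
  intros [M HM] [N HN]. exists (M + N). intros y Hy.
  eapply Rle_trans; [apply Rabs_triang | apply Rplus_le_compat; auto].
Qed.

Lemma bounded_from_mult y0 f g :
  bounded_from y0 f -> bounded_from y0 g -> bounded_from y0 (fun y => f y * g y).
Proof. intros [M HM] [N HN]. exists (M * N). intros y Hy. apply Rabs_mult_le; auto. Qed.

Lemma bounded_from_const y0 k : bounded_from y0 (fun _ => k).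
Proof. exists (Rabs k). intros. apply Rle_refl. Qed.

Lemma inE_le Em y0 y : inE Em y0 -> y0 <= y -> inE Em y.
Proof. unfold inE. destruct Em; simpl; auto; lra. Qed.

Lemma dcoef_factor_bounds Rr rho :
  0 < Rr -> -1 <= rho <= 1 -> 1 <= (1 - rho ^ 2) * Rr + rho ^ 2 + 1 <= Rr + 2.
Proof. intros HRr Hrho. assert (0 <= rho ^ 2 <= 1) by (simpl; nra). nra. Qed.

Section Coefficients.
Variables (y0 Rr : R) (b rho atl e e1 : R -> R).
Hypotheses (He : forall y, y0 <= y -> 0 < e y)
  (Hbe : bounded_from y0 (fun y => b y ^ 2 / e y)).

Lemma coefA_pos y : b y <> 0 -> y0 <= y -> 0 < coefA b e y.
Proof.
  intros Hb Hy. unfold coefA. apply Rdiv_lt_0_compat; [| exact (He y Hy)].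
  apply Rmult_lt_0_compat; [lra | apply pow2_gt_0, Hb].
Qed.

Lemma bounded_from_coefA : bounded_from y0 (coefA b e).
Proof.
  apply (bounded_from_ext y0 (fun y => / 2 * (b y ^ 2 / e y))).
  - intros y _. unfold coefA, Rdiv. ring.
  - apply bounded_from_mult; [apply bounded_from_const | exact Hbe].
Qed.

Let dfactor y := (1 - rho y ^ 2) * Rr + rho y ^ 2 + 1.

Hypotheses (HRr : 0 < Rr) (Hrho : forall y, y0 <= y -> -1 <= rho y <= 1).

Let coefD_dcoef y : y0 <= y -> coefD (dcoef Rr b rho) e y = / 2 * (b y ^ 2 / e y) * dfactor y.
Proof. intro Hy. specialize (He y Hy). unfold coefD, dcoef, dfactor. field. lra. Qed.

Lemma coefD_dcoef_nonneg y : y0 <= y -> 0 <= coefD (dcoef Rr b rho) e y.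
Proof.
  intro Hy. rewrite (coefD_dcoef y Hy).
  pose proof (dcoef_factor_bounds Rr (rho y) HRr (Hrho y Hy)).
  assert (0 <= b y ^ 2 / e y)
    by (apply Rmult_le_pos; [apply pow2_ge_0 | left; apply Rinv_0_lt_compat, He, Hy]).
  unfold dfactor. nra.
Qed.

Lemma bounded_from_coefD_dcoef : bounded_from y0 (coefD (dcoef Rr b rho) e).
Proof.
  apply (bounded_from_ext y0 (fun y => / 2 * (b y ^ 2 / e y) * dfactor y)).
  - intros y Hy. symmetry. exact (coefD_dcoef y Hy).
  - apply bounded_from_mult; [apply bounded_from_mult; [apply bounded_from_const | exact Hbe] |].
    exists (Rr + 2). intros y Hy.
    pose proof (dcoef_factor_bounds Rr (rho y) HRr (Hrho y Hy)).
    apply Rabs_le_between. unfold dfactor. lra.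
Qed.

Lemma bounded_from_coefB :
  bounded_from y0 (fun y => atl y / e y) -> bounded_from y0 (fun y => e1 y / e y) ->
  bounded_from y0 (coefB b atl (dcoef Rr b rho) e e1).
Proof.
  intros Hae He1.
  apply (bounded_from_ext y0 (fun y => b y ^ 2 / e y * (e1 y / e y) + atl y / e y
                                     + -2 * (coefD (dcoef Rr b rho) e y * (e1 y / e y)))).
  - intros y Hy. specialize (He y Hy). unfold coefB, coefD. field. lra.
  - repeat apply bounded_from_plus;
      [| | apply bounded_from_mult; [| apply bounded_from_mult]];
      [apply bounded_from_mult | | apply bounded_from_const | apply bounded_from_coefD_dcoef |];
      assumption.
Qed.

End Coefficients.

Theorem theorem4p10
  (Em : Rbar) (r lam sigma a b rho delta : R -> R) (Rr : R)
  (HEm : Em <> p_infty)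
  (Hr : loc_lipschitz_on Em r) (Hlam : loc_lipschitz_on Em lam)
  (Hsigma : loc_lipschitz_on Em sigma) (Ha : loc_lipschitz_on Em a)
  (Hb : loc_lipschitz_on Em b) (Hrho : loc_lipschitz_on Em rho)
  (Hdelta : loc_lipschitz_on Em delta)
  (Hsigpos : forall y, inE Em y -> 0 < sigma y)
  (Hbnz : forall y, inE Em y -> b y <> 0)
  (Hrhob : forall y, inE Em y -> -1 <= rho y <= 1)
  (HRr : 0 < Rr /\ Rr <> 1)
  (y0 : R) (Hy0 : inE Em y0)
  (eta1 eta2 : R -> R)
  (A1pos : forall y, y0 <= y -> 0 < eta Rr r lam delta y)
  (A1C2 : is_C2_from y0 (eta Rr r lam delta) eta1 eta2)
  (A2b : bounded_from y0 (fun y => (b y) ^ 2 / eta Rr r lam delta y))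
  (A2a : bounded_from y0 (fun y => atilde Rr a rho lam b y / eta Rr r lam delta y))
  (A2e : bounded_from y0 (fun y => eta1 y / eta Rr r lam delta y))
  (A3 : is_lim (Psi b (atilde Rr a rho lam b) (dcoef Rr b rho)
                  (eta Rr r lam delta) eta1 eta2) p_infty 1)
  (u u1 u2 : R -> R)
  (Hu : is_solution_from y0 b (atilde Rr a rho lam b) (eta Rr r lam delta)
          (dcoef Rr b rho) u u1 u2)
  (C1 C2 : R) (HC : 0 < C1 < C2)
  (Hbounds : forall y, y0 <= y ->
     C1 * eta Rr r lam delta y <= u y <= C2 * eta Rr r lam delta y) :
  is_lim (fun y => u y / eta Rr r lam delta y) p_infty 1.
Proof.
  set (e := eta Rr r lam delta) in *. set (atl := atilde Rr a rho lam b) in *.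
  destruct Hu as [[Hu1 [Hu2 _]] [Hupos Hode]]. destruct A1C2 as [He1 [He2 _]].
  assert (Hratio : forall y, y0 <= y -> C1 <= u y / e y <= C2).
  { intros y Hy. specialize (A1pos y Hy). specialize (Hbounds y Hy).
    split; [apply Rle_div_r | apply Rle_div_l]; lra. }
  apply (ratio_limit y0 C1 _ (quot_d1 u u1 e eta1) (quot_d2 u u1 u2 e eta1 eta2)
           (coefA b e) (coefB b atl (dcoef Rr b rho) e eta1) (coefD (dcoef Rr b rho) e)
           (Psi b atl (dcoef Rr b rho) e eta1 eta2));
    try (intros y Hy; pose proof (A1pos y ltac:(lra)); pose proof (Hupos y ltac:(lra))).
  - apply derivable_pt_lim_quot; try apply (derivable_pt_lim_of_is_deriv_from y0); auto; lra.
  - apply derivable_pt_lim_quot_d1; try apply (derivable_pt_lim_of_is_deriv_from y0); auto; lra.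
  - apply ratio_equation; auto; lra.
  - exact (coefA_pos y0 b e A1pos y (Hbnz y (inE_le Em y0 y Hy0 Hy)) Hy).
  - exact (bounded_from_coefA y0 b e A2b).
  - exact (bounded_from_coefB y0 Rr b rho atl e eta1 A1pos A2b (proj1 HRr)
             (fun y Hy => Hrhob y (inE_le Em y0 y Hy0 Hy)) A2a A2e).
  - exact (coefD_dcoef_nonneg y0 Rr b rho e A1pos (proj1 HRr)
             (fun y Hy => Hrhob y (inE_le Em y0 y Hy0 Hy)) y Hy).
  - exact (bounded_from_coefD_dcoef y0 Rr b rho e A1pos A2b (proj1 HRr)
             (fun y Hy => Hrhob y (inE_le Em y0 y Hy0 Hy))).
  - lra.
  - apply Hratio; exact Hy.
  - exists C2. intros y Hy. apply Rabs_le_between. pose proof (Hratio y Hy). lra.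
  - exact A3.
Qed.
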